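(* Let $G$ be a finite group with $c(G)$ conjugacy classes. Then $Spec_3(G)=\{\frac{c(G)}{|G|},1\}$. More precisely, $Pr(a_1a_2a_3=a_{\pi_1}a_{\pi_2}a_{\pi_3})=\frac{c(G)}{|G|}$ for every non-identity $\pi\in S_3$, where $a_1,a_2,a_3$ are independent uniformly random elements of $G$.
   Context: Permutations are written in one-line notation $\pi=\langle\pi_1\dots\pi_n\rangle$, with $\pi_i=\pi(i)$. For a finite group $G$, $Pr_\pi(G)$ is the probability that $a_1\cdots a_n=a_{\pi_1}\cdots a_{\pi_n}$ for independent uniformly random $a_1,\dots,a_n\in G$. $Spec_n(G)$ is the set $\{Pr_\pi(G):\pi\in S_n\}$. $c(G)$ denotes the number of conjugacy classes of $G$. *)

From mathcomp Require Import all_boot all_order all_algebra all_fingroup.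
Set Implicit Arguments. Unset Strict Implicit. Unset Printing Implicit Defensive.
Import GRing.Theory.
Local Open Scope ring_scope.

(* Ordered product a_{1} ... a_{n} of a tuple in a finite group
   (indices 0..n-1 of 'I_n play the role of 1..n). *)
Definition wprod (gT : finGroupType) (n : nat) (a : {ffun 'I_n -> gT}) : gT :=
  (\prod_(i < n) a i)%g.

Definition Pr_perm (gT : finGroupType) (G : {group gT}) (n : nat)
    (pi : 'S_n) : rat :=
  (#|[set a : {ffun 'I_n -> gT} | (a \in family (fun _ => G))
        && (wprod a == wprod [ffun i => a (pi i)])]|)%:R
  / (#|G| ^ n)%:R.

Definition Spec (gT : finGroupType) (G : {group gT}) (n : nat) (q : rat) : Prop :=
  exists pi : 'S_n, Pr_perm G pi = q.

From mathcomp Require Import all_boot all_order all_algebra all_fingroup.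
From mathcomp Require Import ring.
Set Implicit Arguments. Unset Strict Implicit. Unset Printing Implicit Defensive.

(* For each non-identity pi in S_3 an invertible substitution of G^3 turns
   a1 a2 a3 = a_pi1 a_pi2 a_pi3 into "x and y commute", with z free; e.g.
   abc = cba becomes xy = yx for x = ab, y = ca^-1, z = a.  By Burnside's
   lemma for the conjugation action of G on itself, G has c(G)|G| commuting
   pairs, so the probability is c(G)|G|^2 / |G|^3 = c(G)/|G|. *)

Local Notation i0 := (ord0 : 'I_3).
Local Notation i1 := (@Ordinal 3 1 isT).
Local Notation i2 := (@Ordinal 3 2 isT).

Lemma ord3P (i : 'I_3) : [\/ i = i0, i = i1 | i = i2].
Proof.
by case: i => -[|[|[|//]]] lt_i3; [constructor 1 | constructor 2 | constructor 3];
  exact: val_inj.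
Qed.

Section CommutingTriples.
Variables (gT : finGroupType) (G : {group gT}).
Local Open Scope group_scope.

Definition triples := setX (setX G G) G.

Lemma in_triples a b c : (((a, b), c) \in triples) = [&& a \in G, b \in G & c \in G].
Proof. by rewrite !inE andbA. Qed.

Definition commuting_triples :=
  [set t in triples | t.1.1 * t.1.2 == t.1.2 * t.1.1].

Lemma card_commuting_pairs :
  #|[set p in setX G G | p.1 * p.2 == p.2 * p.1]| = (#|classes G| * #|G|)%N.
Proof.
have GactsG : [acts G, on G | 'J] by apply/actsP => x Gx y; apply: groupJr.
transitivity (\sum_(x in G) \sum_(y in 'Fix_(G | 'J)[x]) 1)%N; last first.
  by rewrite -(Frobenius_Cauchy GactsG); apply: eq_bigr => x _; rewrite sum1_card.
rewrite -sum1dep_card pair_big_dep /=; apply: eq_bigl => -[x y] /=.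
rewrite !inE sub1set inE conjg_fix andbA; congr (_ && _).
by apply/eqP/commgP => [|/commute_sym].
Qed.

Lemma card_commuting_triples :
  #|commuting_triples| = (#|classes G| * #|G| * #|G|)%N.
Proof.
rewrite -card_commuting_pairs -cardsX; apply: eq_card => -[[x y] z].
by rewrite !inE andbAC.
Qed.

Lemma card_commuting_preimage (f : gT * gT * gT -> gT * gT * gT)
    (P : pred (gT * gT * gT)) :
  injective f -> {in triples, forall t, f t \in triples} ->
  {in triples, forall t, P t = ((f t).1.1 * (f t).1.2 == (f t).1.2 * (f t).1.1)} ->
  #|[set t in triples | P t]| = #|commuting_triples|.
Proof.
move=> f_inj f_triples P_comm.
have f_onto : f @: triples = triples.
  apply/eqP; rewrite eqEcard card_imset // leqnn andbT.
  by apply/subsetP => _ /imsetP[t Tt ->]; apply: f_triples.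
rewrite -(card_imset _ f_inj); apply: eq_card => u; rewrite [u \in commuting_triples]inE.
apply/imsetP/andP => [[t] | [Tu Cu]].
  by move=> /setIdP[Tt Pt] ->; rewrite -P_comm // f_triples.
have /imsetP[t Tt def_u] : u \in f @: triples by rewrite f_onto.
by exists t => //; apply/setIdP; rewrite P_comm // -def_u.
Qed.

End CommutingTriples.

Section PermutedProducts.
Variables (gT : finGroupType) (G : {group gT}).
Local Open Scope group_scope.

Definition untriple (t : gT * gT * gT) : {ffun 'I_3 -> gT} :=
  [ffun i => tnth [tuple t.1.1; t.1.2; t.2] i].

Lemma untriple0 t : untriple t i0 = t.1.1. Proof. by rewrite ffunE. Qed.
Lemma untriple1 t : untriple t i1 = t.1.2. Proof. by rewrite ffunE. Qed.
Lemma untriple2 t : untriple t i2 = t.2. Proof. by rewrite ffunE. Qed.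

Lemma untriple_bij : bijective untriple.
Proof.
exists (fun a : {ffun 'I_3 -> gT} => ((a i0, a i1), a i2)) => [[[x y] z] | a].
  by rewrite untriple0 untriple1 untriple2.
by apply/ffunP => i; case: (ord3P i) => ->; rewrite ?untriple0 ?untriple1 ?untriple2.
Qed.

Lemma untriple_family t : (untriple t \in family (fun _ => G)) = (t \in triples G).
Proof.
case: t => [[x y] z]; rewrite in_triples; apply/familyP/and3P => [G_t | [Gx Gy Gz] i].
  by split; [move: (G_t i0) | move: (G_t i1) | move: (G_t i2)];
    rewrite ?untriple0 ?untriple1 ?untriple2.
by case: (ord3P i) => ->; rewrite ?untriple0 ?untriple1 ?untriple2.
Qed.

Lemma wprod3 (a : {ffun 'I_3 -> gT}) : wprod a = a i0 * (a i1 * a i2).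
Proof.
by rewrite /wprod !big_ord_recl big_ord0 mulg1; congr (_ * (a _ * a _)); apply: val_inj.
Qed.

Lemma wprod3_perm (a : {ffun 'I_3 -> gT}) (pi : 'S_3) :
  wprod [ffun i => a (pi i)] = a (pi i0) * (a (pi i1) * a (pi i2)).
Proof. by rewrite wprod3 !ffunE. Qed.

Definition perm_solutions (pi : 'S_3) :=
  [set a : {ffun 'I_3 -> gT} | (a \in family (fun _ => G))
                             && (wprod a == wprod [ffun i => a (pi i)])].

Lemma card_perm_solutions pi :
  #|perm_solutions pi| = #|[set t in triples G | t.1.1 * (t.1.2 * t.2) ==
        untriple t (pi i0) * (untriple t (pi i1) * untriple t (pi i2))]|.
Proof.
rewrite -(on_card_preimset (onW_bij _ untriple_bij)); apply: eq_card => t.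
by rewrite [RHS]in_set [LHS]in_set [LHS]in_set untriple_family wprod3_perm wprod3
  untriple0 untriple1 untriple2.
Qed.

Lemma card_perm_solutions_id : #|perm_solutions 1| = (#|G| ^ 3)%N.
Proof.
rewrite card_perm_solutions (eq_card (B := triples G)) => [|t].
  by rewrite !cardsX !expnS expn0 muln1 mulnA.
by rewrite [LHS]in_set !perm1 untriple0 untriple1 untriple2 eqxx andbT.
Qed.

Lemma card_perm_solutions_nonid pi : pi != 1 ->
  #|perm_solutions pi| = (#|classes G| * #|G| * #|G|)%N.
Proof.
move=> pi_neq1; rewrite card_perm_solutions -card_commuting_triples.
have pi_eq i j : (pi i == pi j) = (i == j) := inj_eq perm_inj i j.
case: (ord3P (pi i0)) => p0; case: (ord3P (pi i1)) => p1; case: (ord3P (pi i2)) => p2;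
  move: (pi_eq i0 i1) (pi_eq i0 i2) (pi_eq i1 i2); rewrite p0 p1 p2;
  move=> //= _ _ _.
- by case/eqP: pi_neq1; apply/permP => i; rewrite perm1; case: (ord3P i) => ->.
- apply: (card_commuting_preimage (f := fun t => ((t.1.2, t.2), t.1.1))).
  + by move=> [[a b] c] [[a' b'] c'] [-> -> ->].
  + by move=> [[a b] c]; rewrite !in_triples => /and3P[-> -> ->].
  + move=> [[a b] c] _; rewrite /= !(untriple0, untriple1, untriple2) /=.
    exact: (inj_eq (mulgI a)).
- apply: (card_commuting_preimage (f := id)) => // -[[a b] c] _.
  by rewrite /= !(untriple0, untriple1, untriple2) /= !mulgA (inj_eq (mulIg c)).
- apply: (card_commuting_preimage (f := fun t => ((t.1.1, t.1.2 * t.2), t.2))).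
  + apply: (can_inj (g := fun t => ((t.1.1, t.1.2 * t.2^-1), t.2))).
    by move=> [[a b] c] /=; rewrite mulgK.
  + by move=> [[a b] c]; rewrite !in_triples => /and3P[Ga Gb Gc]; rewrite Ga groupM.
  + move=> [[a b] c] _; rewrite /= !(untriple0, untriple1, untriple2) /=.
    by rewrite (mulgA b).
- apply: (card_commuting_preimage (f := fun t => ((t.1.1 * t.1.2, t.2), t.1.1))).
  + apply: (can_inj (g := fun t => ((t.2, t.2^-1 * t.1.1), t.1.2))).
    by move=> [[a b] c] /=; rewrite mulKg.
  + by move=> [[a b] c]; rewrite !in_triples => /and3P[Ga Gb Gc]; rewrite Ga Gc groupM.
  + move=> [[a b] c] _; rewrite /= !(untriple0, untriple1, untriple2) /=.
    by rewrite mulgA.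
- apply: (card_commuting_preimage
            (f := fun t => ((t.1.1 * t.1.2, t.2 * t.1.1^-1), t.1.1))).
  + apply: (can_inj (g := fun t => ((t.2, t.2^-1 * t.1.1), t.1.2 * t.2))).
    by move=> [[a b] c] /=; rewrite mulKg mulgKV.
  + move=> [[a b] c]; rewrite !in_triples => /and3P[Ga Gb Gc].
    by rewrite Ga !groupM ?groupV.
  + move=> [[a b] c] _; rewrite /= !(untriple0, untriple1, untriple2) /=.
    by rewrite (mulgA (c * a^-1)) mulgKV -[RHS](inj_eq (mulIg a)) !mulgA mulgKV.
Qed.

End PermutedProducts.

Import GRing.Theory Num.Theory.
Local Open Scope ring_scope.

Lemma Pr_perm_id (gT : finGroupType) (G : {group gT}) : Pr_perm G (1%g : 'S_3) = 1.
Proof.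
rewrite /Pr_perm (card_perm_solutions_id G) divff //.
by rewrite pnatr_eq0 -lt0n expn_gt0 cardG_gt0.
Qed.

Lemma Pr_perm_nonid (gT : finGroupType) (G : {group gT}) (pi : 'S_3) :
  pi != 1%g -> Pr_perm G pi = #|classes G|%:R / #|G|%:R.
Proof.
move=> pi_neq1; rewrite /Pr_perm (card_perm_solutions_nonid G pi_neq1) natrX !natrM.
by field; rewrite pnatr_eq0 -lt0n cardG_gt0.
Qed.

Theorem mainTheorem5 (gT : finGroupType) (G : {group gT}) :
  (forall q : rat,
     Spec G 3 q <-> (q = (#|classes G|)%:R / (#|G|)%:R \/ q = 1)) /\
  (forall pi : 'S_3, pi != 1%g ->
     Pr_perm G pi = (#|classes G|)%:R / (#|G|)%:R).
Proof.
split=> [q|]; last exact: Pr_perm_nonid.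
split=> [[pi <-] | [->|->]].
- have [->|pi_neq1] := eqVneq pi 1%g; first by right; apply: Pr_perm_id.
  by left; apply: Pr_perm_nonid.
- exists (tperm i0 i1); apply: Pr_perm_nonid.
  by apply/eqP => /permP/(_ i0)/(congr1 val); rewrite tpermL perm1.
- by exists 1%g; apply: Pr_perm_id.
Qed.
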